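(* For $w>0$, the graphic generating function of directed acyclic graphs satisfies, as an identity of formal power series in $z$, \[u\,\partial_u \mathrm{DAG}(z,w,u)=u z\,\mathrm{DAG}\!\left(\frac{z}{1+w},w,u\right)\mathrm{DAG}\!\left(z,w,\frac{w}{1+w}\right).\]
   Context: For a labelled DAG $G$ (directed acyclic graph on vertex set $\{1,\dots,n\}$, $n\ge0$), $v(G)$, $e(G)$, $s(G)$ denote its numbers of vertices, edges, and sources (vertices of in-degree $0$). $\mathrm{DAG}(z,w,u)=\sum_G \frac{z^{v(G)}w^{e(G)}u^{s(G)}}{(1+w)^{\binom{v(G)}{2}}v(G)!}$, the sum over all labelled DAGs. (It is known that $\mathrm{DAG}(z,w,u)=\mathrm{Set}((u-1)z,w)/\mathrm{Set}(-z,w)$ with $\mathrm{Set}(z,w)=\sum_{n\ge0}\frac{z^n}{(1+w)^{\binom n2}n!}$.) *)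

From mathcomp Require Import all_boot all_order all_algebra.
Set Implicit Arguments. Unset Strict Implicit. Unset Printing Implicit Defensive.
Import Order.TTheory GRing.Theory Num.Theory.
Local Open Scope ring_scope.

(* A labelled digraph on {0,..,n-1} is its edge set E; (x,y) \in E is an
   edge x -> y. *)
Definition edge_rel n (E : {set 'I_n * 'I_n}) : rel 'I_n :=
  fun x y => (x, y) \in E.

Definition is_dag n (E : {set 'I_n * 'I_n}) : bool :=
  [forall x, forall y, ((x, y) \in E) ==> ~~ connect (edge_rel E) y x].

Definition nsources n (E : {set 'I_n * 'I_n}) : nat :=
  #|[set v : 'I_n | [forall x, (x, v) \notin E]]|.

(* Formal power series in z with coefficients polynomials in u over R. *)
Definition series (R : nzRingType) := nat -> {poly R}.

(* Coefficient of z^n in DAG(z,w,u), as a polynomial in u: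
   sum over DAGs G on n vertices of w^e(G) u^s(G) / ((1+w)^C(n,2) n!). *)
Definition DAGcoef (R : fieldType) (w : R) (n : nat) : {poly R} :=
  ((1 + w) ^+ 'C(n, 2) * (n`!)%:R)^-1 *:
    \sum_(E : {set 'I_n * 'I_n} | is_dag E) (w ^+ #|E|) *: 'X^(nsources E).

Definition DAG (R : fieldType) (w : R) : series R := fun n => DAGcoef w n.

Definition DAG_zscale (R : fieldType) (w c : R) : series R :=
  fun n => (c ^+ n) *: DAGcoef w n.

Definition DAG_ueval (R : fieldType) (w a : R) : series R :=
  fun n => ((DAGcoef w n).[a])%:P.

Definition u_du (R : nzRingType) (F : series R) : series R :=
  fun n => 'X * (F n)^`().

Definition smul (R : nzRingType) (F G : series R) : series R :=
  fun n => \sum_(i < n.+1) F i * G (n - i)%N.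

Definition uz_mul (R : nzRingType) (F : series R) : series R :=
  fun n => if n is m.+1 then 'X * F m else 0.

From mathcomp Require Import all_boot all_order all_algebra ring.
From Stdlib Require Import FunctionalExtensionality.
Import Order.TTheory GRing.Theory Num.Theory.
Set Implicit Arguments. Unset Strict Implicit. Unset Printing Implicit Defensive.

(* Write D_n(u) for the coefficient of z^n in DAG(z,w,u).  Differentiating in u
   marks a source v of a DAG on n+1 vertices.  Deleting v leaves an arbitrary
   DAG E on the other n vertices together with an arbitrary out-neighbourhood S
   of v, and the sources of the whole graph are v and the sources of E outside
   S.  Summing over S turns u^s(E) into (u+w)^s(E) (1+w)^(n-s(E)), which after
   normalisation is  D_{n+1}'(u) = D_n((u+w)/(1+w)).
   The theorem asks for D_n((u+w)/(1+w)) = sum_i (1+w)^-i D_i(u) D_{n-i}(w/(1+w)).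
   Both sides agree at u = 0, since every nonempty DAG has a source, and by
   the first identity their u-derivatives are the same identity for n-1
   composed with u |-> (u+w)/(1+w), so induction on n concludes. *)

Definition sources n (E : {set 'I_n * 'I_n}) : {set 'I_n} :=
  [set y | [forall x, (x, y) \notin E]].

Lemma nsourcesE n (E : {set 'I_n * 'I_n}) : nsources E = #|sources E|.
Proof. by []. Qed.

Lemma nsources_le n (E : {set 'I_n * 'I_n}) : nsources E <= n.
Proof. by rewrite -[n in _ <= n]card_ord max_card. Qed.

Lemma dag_nsources_gt0 n (E : {set 'I_n.+1 * 'I_n.+1}) :
  is_dag E -> 0 < nsources E.
Proof.
move=> /forallP dag.
pose anc x := [set y | connect (edge_rel E) y x].
have [x _ xmin] := @arg_minnP _ ord0 xpredT (fun x => #|anc x|) isT.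
apply/card_gt0P; exists x; rewrite inE; apply/forallP => y.
apply/negP => yx; have := xmin y isT; apply/negP; rewrite -ltnNge.
apply: proper_card; apply/properP; split.
  by apply/subsetP => z; rewrite !inE => zy; apply: connect_trans zy (connect1 yx).
exists x; first by rewrite inE connect0.
by rewrite inE; move/forallP: (dag y) => /(_ x) /implyP; apply.
Qed.

Section AddSource.
Variables (n : nat) (v : 'I_n.+1).

Definition add_source (E : {set 'I_n * 'I_n}) (S : {set 'I_n}) :
    {set 'I_n.+1 * 'I_n.+1} :=
  [set p | if unlift v p.2 is Some y then
             if unlift v p.1 is Some x then (x, y) \in E else y \in S
           else false].

Definition del_source (E : {set 'I_n.+1 * 'I_n.+1}) : {set 'I_n * 'I_n} :=
  [set p | (lift v p.1, lift v p.2) \in E].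

Definition out_nbhd (E : {set 'I_n.+1 * 'I_n.+1}) : {set 'I_n} :=
  [set y | (v, lift v y) \in E].

Section AddSourceTo.
Variables (E : {set 'I_n * 'I_n}) (S : {set 'I_n}).

Lemma add_source_lift x y : ((lift v x, lift v y) \in add_source E S) = ((x, y) \in E).
Proof. by rewrite inE /= !liftK. Qed.

Lemma add_source_out y : ((v, lift v y) \in add_source E S) = (y \in S).
Proof. by rewrite inE /= liftK unlift_none. Qed.

Lemma add_source_in a : ((a, v) \in add_source E S) = false.
Proof. by rewrite inE /= unlift_none. Qed.

Lemma del_add_source : del_source (add_source E S) = E.
Proof. by apply/setP => -[x y]; rewrite inE add_source_lift. Qed.

Lemma out_nbhd_add_source : out_nbhd (add_source E S) = S.
Proof. by apply/setP => y; rewrite inE add_source_out. Qed.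

Lemma connect_add_source_to a : connect (edge_rel (add_source E S)) a v -> a = v.
Proof.
case/connectP => p; case/lastP: p => [_ -> //|p b].
by rewrite rcons_path last_rcons => /andP[_] + bv; rewrite -bv /edge_rel add_source_in.
Qed.

Lemma connect_add_source_lift x y :
  connect (edge_rel (add_source E S)) (lift v x) (lift v y) = connect (edge_rel E) x y.
Proof.
apply/idP/idP; last first.
  case/connectP => p pE ->; apply/connectP; exists (map (lift v) p).
    by apply: homo_path pE => a b; rewrite /edge_rel add_source_lift.
  by rewrite last_map.
case/connectP => p; elim: p x => [x _ /lift_inj -> //|b p IHp x] /=.
case/andP; case: (unliftP v b) => [x' -> | ->]; last by rewrite /edge_rel add_source_in.
rewrite /edge_rel add_source_lift => exx' px' ly.
exact: connect_trans (connect1 exx') (IHp _ px' ly).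
Qed.

Lemma is_dag_add_source : is_dag (add_source E S) = is_dag E.
Proof.
apply/forallP/forallP => dag a.
  apply/forallP => b; apply/implyP => eab.
  move/forallP: (dag (lift v a)) => /(_ (lift v b)) /implyP.
  by rewrite add_source_lift connect_add_source_lift; apply.
apply/forallP => b; apply/implyP.
case: (unliftP v b) => [y ->|->]; last by rewrite add_source_in.
case: (unliftP v a) => [x ->|-> _].
  rewrite add_source_lift connect_add_source_lift => exy.
  by move/forallP: (dag x) => /(_ y) /implyP; apply.
by apply/negP => /connect_add_source_to /eqP; rewrite eq_sym (negbTE (neq_lift _ _)).
Qed.

Lemma card_add_source : #|add_source E S| = #|E| + #|S|.
Proof.
have card_pairs m (F : {set 'I_m * 'I_m}) :
    #|F| = \sum_a \sum_b ((a, b) \in F : nat).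
  by rewrite -sum1_card big_mkcond pair_bigA; apply: eq_bigr => -[a b] _; case: ifP.
rewrite !card_pairs (bigD1_ord v) //= (bigD1_ord v) //= add_source_in addnC.
rewrite -sum1_card; congr (_ + _).
  apply: eq_bigr => x _; rewrite (bigD1_ord v) //= add_source_in.
  by apply: eq_bigr => y _; rewrite add_source_lift.
by rewrite add0n [RHS]big_mkcond; apply: eq_bigr => y _; rewrite add_source_out.
Qed.

Lemma sources_add_source : sources (add_source E S) = v |: lift v @: (sources E :\: S).
Proof.
apply/setP => a; rewrite !inE; case: (unliftP v a) => [y ->|->]; last first.
  by rewrite eqxx; apply/forallP => x; rewrite add_source_in.
rewrite eq_sym (negbTE (neq_lift _ _)) mem_imset; last exact: lift_inj.
rewrite !inE; apply/forallP/andP => [src|[yS /forallP src] b].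
  split; first by move: (src v); rewrite add_source_out.
  by apply/forallP => x; move: (src (lift v x)); rewrite add_source_lift.
by case: (unliftP v b) => [x ->|->]; rewrite ?add_source_lift ?add_source_out.
Qed.

Lemma nsources_add_source : nsources (add_source E S) = #|sources E :\: S|.+1.
Proof.
rewrite nsourcesE sources_add_source cardsU1 card_imset; last exact: lift_inj.
by case: imsetP => // -[x _ /eqP]; rewrite (negbTE (neq_lift _ _)).
Qed.

End AddSourceTo.

Lemma add_del_source E :
  v \in sources E -> add_source (del_source E) (out_nbhd E) = E.
Proof.
rewrite inE => /forallP src; apply/setP => -[a b].
case: (unliftP v b) => [y ->|->]; last by rewrite add_source_in; apply/esym/negbTE.
case: (unliftP v a) => [x ->|->]; first by rewrite add_source_lift inE.
by rewrite add_source_out inE.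
Qed.

End AddSource.

Local Open Scope ring_scope.

Lemma sum_expr_subsets (R : comNzRingType) (T : finType) (A : {set T}) (a b : R) :
  \sum_(S : {set T}) b ^+ #|S| * a ^+ #|A :\: S| =
  (b + a) ^+ #|A| * (b + 1) ^+ #|~: A|.
Proof.
have prod_if (P : pred T) (c : R) :
    \prod_t (if P t then c else 1) = c ^+ #|[set t | P t]|.
  by rewrite -big_mkcond prodr_const; apply: congr1; apply: eq_card => t; rewrite inE.
transitivity (\prod_t \sum_(j : bool) if j then b else if t \in A then a else 1).
  rewrite bigA_distr_bigA /= (reindex (fun f : {ffun T -> bool} => [set t | f t])).
    apply: eq_bigr => f _; rewrite -!prod_if -big_split /=.
    apply: eq_bigr => t _; rewrite inE.
    by case: (f t); case: (t \in A); rewrite ?mulr1 ?mul1r.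
  exists (fun S : {set T} => [ffun t => t \in S]) => [f _|S _].
    by apply/ffunP => t; rewrite ffunE inE.
  by apply/setP => t; rewrite inE ffunE.
rewrite (eq_bigr (fun t =>
  (if t \in A then b + a else 1) * (if t \in ~: A then b + 1 else 1))).
  by rewrite big_split /= !prod_if !cardsE.
by move=> t _; rewrite big_bool inE; case: (t \in A); rewrite ?mulr1 ?mul1r.
Qed.

Lemma deriv_eq0_polyC (R : numDomainType) (p : {poly R}) :
  p^`() = 0 -> p = (p.[0])%:P.
Proof.
move=> dp0; apply/polyP => -[|i]; rewrite coefC horner_coef0 //=.
have := congr1 (coefp i) dp0; rewrite /= coef_deriv coef0 => /eqP.
by rewrite mulrn_eq0 => /eqP.
Qed.

Lemma eq_deriv_horner0 (R : numDomainType) (p q : {poly R}) :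
  p^`() = q^`() -> p.[0] = q.[0] -> p = q.
Proof.
move=> dpq pq0; apply/eqP; rewrite -subr_eq0; apply/eqP.
by rewrite [p - q]deriv_eq0_polyC ?derivB ?dpq ?subrr // hornerD hornerN pq0 subrr.
Qed.

Section DagPoly.
Variables (R : numFieldType) (w : R).

Definition dag_poly n : {poly R} :=
  \sum_(E : {set 'I_n * 'I_n} | is_dag E) w ^+ #|E| *: 'X^(nsources E).

Lemma DAGcoefE n : DAGcoef w n = ((1 + w) ^+ 'C(n, 2) * n`!%:R)^-1 *: dag_poly n.
Proof. by []. Qed.

Lemma DAGcoef0 : DAGcoef w 0 = 1.
Proof.
have E0 (E : {set 'I_0 * 'I_0}) : E = set0 by apply/setP => -[[]].
rewrite DAGcoefE /dag_poly (big_pred1 set0) => [|E]; last first.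
  by rewrite (E0 E) /= eqxx; apply/forallP => -[].
have := nsources_le (set0 : {set 'I_0 * 'I_0}); rewrite leqn0 => /eqP ->.
by rewrite cards0 !expr0 mulr1 invr1 !scale1r.
Qed.

Lemma DAGcoefS_horner0 n : (DAGcoef w n.+1).[0] = 0.
Proof.
rewrite DAGcoefE hornerZ horner_sum big1 ?mulr0 // => E /dag_nsources_gt0.
by rewrite hornerZ hornerXn expr0n => /lt0n_neq0 /negbTE ->; rewrite mulr0.
Qed.

Lemma deriv_dag_poly_sources n : (dag_poly n.+1)^`() =
  \sum_(v < n.+1) \sum_(E | is_dag E && (v \in sources E))
     w ^+ #|E| *: 'X^((nsources E).-1).
Proof.
rewrite raddf_sum (exchange_big_dep (@is_dag n.+1)) /= => [|v E _ /andP[] //].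
apply: eq_bigr => E dagE.
rewrite (eq_bigl (mem (sources E))) => [|v]; last by rewrite dagE.
by rewrite derivZ derivXn sumr_const scalerMnr.
Qed.

Lemma sum_dags_with_source n (v : 'I_n.+1) :
  \sum_(E | is_dag E && (v \in sources E)) w ^+ #|E| *: 'X^((nsources E).-1) =
  \sum_(E : {set 'I_n * 'I_n} | is_dag E)
     w ^+ #|E| *: (('X + w%:P) ^+ nsources E * ((1 + w) ^+ (n - nsources E))%:P).
Proof.
rewrite (reindex (fun ES : {set 'I_n * 'I_n} * {set 'I_n} => add_source v ES.1 ES.2)).
  rewrite (eq_bigl (fun ES => is_dag ES.1 && xpredT ES.2)) => [|[E S]]; last first.
    by rewrite /= is_dag_add_source sources_add_source setU11 andbT.
  rewrite -(pair_big (@is_dag n) xpredT (fun E S =>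
    w ^+ #|add_source v E S| *: 'X^((nsources (add_source v E S)).-1))) /=.
  apply: eq_bigr => E _.
  under eq_bigr do rewrite card_add_source nsources_add_source exprD -scalerA.
  rewrite -scaler_sumr; congr (_ *: _).
  under eq_bigr do rewrite -mul_polyC polyC_exp.
  rewrite sum_expr_subsets addrC [w%:P + 1]addrC -polyCD -polyC_exp.
  by rewrite nsourcesE -[n in (n - _)%N]card_ord -(cardsC (sources E)) addKn.
exists (fun E => (del_source v E, out_nbhd v E)) => [[E S] _|E].
  by rewrite del_add_source out_nbhd_add_source.
by rewrite inE => /andP[_ /add_del_source].
Qed.

Definition src_weight : {poly R} := (1 + w)^-1 *: ('X + w%:P).

Hypothesis w1_neq0 : 1 + w != 0.

Lemma deriv_dag_poly n :
  (dag_poly n.+1)^`() = (n.+1%:R * (1 + w) ^+ n) *: (dag_poly n \Po src_weight).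
Proof.
rewrite deriv_dag_poly_sources; under eq_bigr do rewrite sum_dags_with_source.
rewrite sumr_const card_ord -scalerA scaler_nat; congr (_ *+ _).
rewrite /dag_poly raddf_sum scaler_sumr; apply: eq_bigr => E _ /=.
rewrite comp_polyZ (rmorphXn (comp_poly src_weight)) /= comp_polyX exprZn.
rewrite mulrC mul_polyC !scalerA.
have -> : (1 + w) ^+ n = (1 + w) ^+ (n - nsources E) * (1 + w) ^+ nsources E.
  by rewrite -exprD subnK ?nsources_le.
congr (_ *: _); rewrite exprVn.
by field; rewrite expf_neq0.
Qed.

Lemma deriv_DAGcoef n : (DAGcoef w n.+1)^`() = DAGcoef w n \Po src_weight.
Proof.
rewrite !DAGcoefE derivZ deriv_dag_poly comp_polyZ scalerA; congr (_ *: _).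
rewrite binS bin1 factS natrM exprD.
by field; rewrite nat1r !pnatr_eq0 -lt0n fact_gt0 !expf_neq0.
Qed.

Lemma src_weight_horner0 : src_weight.[0] = w / (1 + w).
Proof. by rewrite hornerZ hornerD hornerX hornerC add0r mulrC. Qed.

Lemma deriv_src_weight : src_weight^`() = ((1 + w)^-1)%:P.
Proof. by rewrite derivZ derivD derivX derivC addr0 -mul_polyC mulr1. Qed.

Lemma comp_DAGcoef_src_weight n :
  DAGcoef w n \Po src_weight =
  \sum_(i < n.+1)
     ((1 + w)^-1 ^+ i *: DAGcoef w i) * ((DAGcoef w (n - i)).[w / (1 + w)])%:P.
Proof.
elim: n => [|n IHn].
  by rewrite big_ord1 DAGcoef0 -polyC1 comp_polyC expr0 scale1r hornerC mul1r.
apply: eq_deriv_horner0; last first.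
  rewrite horner_comp src_weight_horner0 horner_sum big_ord_recl big1 ?addr0 => [|i _].
    by rewrite DAGcoef0 expr0 scale1r mul1r hornerC subn0.
  by rewrite hornerM hornerZ DAGcoefS_horner0 mulr0 mul0r.
rewrite deriv_comp deriv_DAGcoef IHn deriv_src_weight.
rewrite (raddf_sum (comp_poly src_weight)) mulr_suml.
rewrite [RHS]raddf_sum [RHS]big_ord_recl /=.
rewrite derivM DAGcoef0 -polyC1 derivZ !derivC !(scaler0, mul0r, mulr0, add0r).
apply: eq_bigr => i _; rewrite derivM derivC mulr0 addr0 derivZ deriv_DAGcoef.
rewrite comp_polyM comp_polyZ comp_polyC subSS exprS.
by rewrite -!mul_polyC polyCM; ring.
Qed.

End DagPoly.

Theorem theorem2 (R : realFieldType) (w : R) (hw : 0 < w) :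
  u_du (DAG w) =
  uz_mul (smul (DAG_zscale w (1 + w)^-1) (DAG_ueval w (w / (1 + w)))).
Proof.
have w1_neq0 : 1 + w != 0 by rewrite gt_eqF // ltr_wpDr // ltW.
apply: functional_extensionality => -[|n].
  by rewrite /u_du /DAG DAGcoef0 -polyC1 derivC mulr0.
by rewrite /u_du /DAG /uz_mul /smul deriv_DAGcoef // comp_DAGcoef_src_weight.
Qed.
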